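(* Let $G=(V,E)$ be a finite graph with $V\neq\emptyset$, let $f$ be a weight function of one of the two types described in the context (with its associated integer $k$), let $g(S)=f(S)/|S|$, and let $\epsilon\ge 0$. Let $S^p$ be the vertex set returned by the parallel peeling algorithm described in the context, and let $S^*$ be a nonempty vertex set maximizing $g$ over all nonempty subsets of $V$. Then $g(S^p)\ge \dfrac{g(S^* )}{k(1+\epsilon)}$.
   Context: Let $G=(V,E)$ be a (directed or undirected) graph. For $S\subseteq V$, $G[S]=(S,E[S])$ is the induced subgraph, $E[S]=\{(u,v)\in E: u,v\in S\}$. Two types of weight functions $f:2^V\to\mathbb{R}_{\ge 0}$ are considered. (Type A, with $k=2$; covers the metrics DG, DW, FD): fixed numbers $a_i\ge 0$ for each vertex $u_i$ and $c_{ij}\ge 0$ for each edge $(u_i,u_j)\in E$ are given, and $f(S)=\sum_{u_i\in S}a_i+\sum_{(u_i,u_j)\in E[S]}c_{ij}$. (Type B, with $k\ge 3$ the clique size; covers TDS for $k=3$ and $k$-clique densest subgraph for general $k$): $f(S)$ is the number of $k$-cliques of $G[S]$. The density is $g(S)=f(S)/|S|$ for nonempty $S$. The peeling weight of $u\in S$ is $w_u(S)=f(S)-f(S\setminus\{u\})$. Parallel peeling algorithm with parameter $\epsilon\ge 0$: set $S_0=V$, $i=1$; while $S_{i-1}\neq\emptyset$: let $U=\{u\in S_{i-1}: w_u(S_{i-1})\le k(1+\epsilon)\,g(S_{i-1})\}$, set $S_i=S_{i-1}\setminus U$, and increase $i$ by one. The algorithm outputs $S^p=\arg\max_{S_i}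 g(S_i)$ over the nonempty sets $S_i$ produced. *)

From mathcomp Require Import all_boot all_order all_algebra.
Set Implicit Arguments. Unset Strict Implicit. Unset Printing Implicit Defensive.
Import Order.TTheory GRing.Theory Num.Theory.
Local Open Scope ring_scope.

(* A finite graph on vertex type T is given by an edge relation E : rel T
   (E u v means (u,v) is an edge).  Graphs are loopless. *)

Section Peeling.
Variables (R : realFieldType) (T : finType).

Definition typeA_weight (E : rel T) (a : T -> R) (c : T -> T -> R)
    (S : {set T}) : R :=
  \sum_(u in S) a u + \sum_(p in [set p : T * T | (p.1 \in S) && (p.2 \in S) && E p.1 p.2]) c p.1 p.2.

Definition is_typeA (E : rel T) (f : {set T} -> R) : Prop :=
  exists (a : T -> R) (c : T -> T -> R),
    (forall u, 0 <= a u) /\ (forall u v, E u v -> 0 <= c u v) /\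
    f = typeA_weight E a c.

Definition is_clique (E : rel T) (K : {set T}) : bool :=
  [forall u in K, forall v in K, (u != v) ==> E u v].

Definition kclique_count (E : rel T) (k : nat) (S : {set T}) : R :=
  (#|[set K : {set T} | (K \subset S) && (#|K| == k) && is_clique E K]|)%:R.

Definition is_typeB (E : rel T) (k : nat) (f : {set T} -> R) : Prop :=
  symmetric E /\ f = kclique_count E k.

Definition density (f : {set T} -> R) (S : {set T}) : R := f S / (#|S|)%:R.

Definition peel_weight (f : {set T} -> R) (u : T) (S : {set T}) : R :=
  f S - f (S :\ u).

(* one round of parallel peeling: remove U = {u in S | w_u(S) <= k(1+eps) g(S)} *)
Definition peel_step (f : {set T} -> R) (k : nat) (eps : R) (S : {set T}) : {set T} :=
  [set u in S | k%:R * (1 + eps) * density f S < peel_weight f u S].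

Definition peel_iter (f : {set T} -> R) (k : nat) (eps : R) (i : nat) : {set T} :=
  iter i (peel_step f k eps) [set: T].

End Peeling.

From mathcomp Require Import all_boot all_order all_algebra.
From mathcomp Require Import zify ring lra.
Set Implicit Arguments. Unset Strict Implicit. Unset Printing Implicit Defensive.
Import Order.TTheory GRing.Theory Num.Theory.
Local Open Scope ring_scope.

(* Both kinds of weight satisfy f(∅) = 0 and f >= 0, have peeling weights
   w_u(S) that are monotone in S, and satisfy Σ_{u ∈ S} w_u(S) <= k f(S).
   By averaging, every round removes a vertex, so the peeling empties V.
   For a densest set D, maximality gives g(D) <= w_u(D) for all u ∈ D.  In
   the first round i in which some u ∈ D is removed we still have D ⊆ S_i,
   hence g(D) <= w_u(D) <= w_u(S_i) <= k(1+ε) g(S_i) <= k(1+ε) g(S^p). *)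

Lemma ler_sum_cond (R : numDomainType) (I : Type) (r : seq I) (P Q : pred I)
    (F : I -> R) :
  (forall i, P i -> Q i) -> (forall i, Q i -> 0 <= F i) ->
  \sum_(i <- r | P i) F i <= \sum_(i <- r | Q i) F i.
Proof.
move=> PQ F_ge0; rewrite [X in _ <= X](bigID P) /=.
rewrite (eq_bigl P) => [|i]; last by case Pi: (P i); rewrite ?andbF ?PQ.
by rewrite lerDl sumr_ge0 // => i /andP[/F_ge0].
Qed.

Section PeelingApproximation.
Variables (R : realFieldType) (T : finType) (f : {set T} -> R) (k : nat) (eps : R).

Local Notation S_ i := (peel_iter f k eps i).

Hypothesis f_ge0 : forall S : {set T}, 0 <= f S.
Hypothesis sum_peel_weight_le : forall S : {set T},
  \sum_(u in S) peel_weight f u S <= k%:R * f S.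

Lemma exists_peel_weight_le_density (S : {set T}) : S != set0 ->
  exists2 u, u \in S & peel_weight f u S <= k%:R * density f S.
Proof.
move=> S_n0; have S_gt0 : (0 < #|S|)%N by rewrite card_gt0.
have [/exists_inP[u uS le_w]|/exists_inPn gt_w] :=
  boolP [exists u in S, peel_weight f u S <= k%:R * density f S].
  by exists u.
have := sum_peel_weight_le S; rewrite leNgt => /negP[].
have -> : k%:R * f S = \sum_(u in S) k%:R * density f S.
  rewrite sumr_const /density -mulrnAr -[f S / _ *+ _]mulr_natr.
  by rewrite divfK // pnatr_eq0 -lt0n.
apply: ltr_sum => [|u uS]; last by rewrite ltNge gt_w.
by case/set0Pn: S_n0 => x xS; apply/hasP; exists x; rewrite ?mem_index_enum.
Qed.

Hypothesis eps_ge0 : 0 <= eps.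

Lemma peel_step_sub (S : {set T}) : peel_step f k eps S \subset S.
Proof. by apply/subsetP => x; rewrite inE => /andP[]. Qed.

Lemma peel_step_proper (S : {set T}) : S != set0 -> peel_step f k eps S \proper S.
Proof.
move=> S_n0; have [u uS le_w] := exists_peel_weight_le_density S_n0.
apply/properP; split; first exact: peel_step_sub.
exists u; rewrite // inE uS -leNgt (le_trans le_w) // -mulrA ler_wpM2l //.
by rewrite ler_peMl ?lerDl // divr_ge0.
Qed.

Lemma card_peel_iter n : (#|S_ n| <= #|T| - n)%N.
Proof.
elim: n => [|n IHn]; first by rewrite subn0 max_card.
rewrite [S_ n.+1]iterS -/(S_ n).
have [S_n0|S_n0] := eqVneq (S_ n) set0.
  by have := subset_leq_card (peel_step_sub (S_ n)); rewrite S_n0 cards0; lia.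
have := proper_card (peel_step_proper S_n0); lia.
Qed.

Lemma peel_iter_card_T : S_ #|T| = set0.
Proof. by apply/eqP; rewrite -cards_eq0 -leqn0 -(subnn #|T|) card_peel_iter. Qed.

Lemma exists_peeled_vertex (A : {set T}) : A != set0 -> exists i, exists2 u, u \in A &
  A \subset S_ i /\ peel_weight f u (S_ i) <= k%:R * (1 + eps) * density f (S_ i).
Proof.
move=> A_n0; have ex_out : exists n, ~~ (A \subset S_ n).
  by exists #|T|; rewrite peel_iter_card_T subset0.
case: (ex_minnP ex_out) => -[|i]; first by rewrite subsetT.
move=> A_out A_min; exists i.
have A_in : A \subset S_ i by apply: contraT => /A_min; lia.
case/subsetPn: A_out => u uA.
rewrite [S_ i.+1]iterS -/(S_ i) inE (subsetP A_in u uA) -leNgt => le_w.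
by exists u.
Qed.

Hypothesis f_set0 : f set0 = 0.

Lemma le_max_density_card d : (forall S : {set T}, S != set0 -> density f S <= d) ->
  forall S : {set T}, f S <= d * #|S|%:R.
Proof.
move=> le_d S; have [->|S_n0] := eqVneq S set0; first by rewrite f_set0 cards0 mulr0.
by rewrite -ler_pdivrMr ?ltr0n ?card_gt0 // le_d.
Qed.

Lemma max_density_le_peel_weight (Sstar : {set T}) u :
  (forall S : {set T}, S != set0 -> density f S <= density f Sstar) -> u \in Sstar ->
  density f Sstar <= peel_weight f u Sstar.
Proof.
move=> Sstar_max uS; set d := density f Sstar.
have card_Sstar : #|Sstar|%:R = 1 + #|Sstar :\ u|%:R :> R.
  by rewrite (cardsD1 u) uS natrD.
have f_Sstar : f Sstar = d * #|Sstar|%:R.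
  by rewrite divfK // card_Sstar paddr_eq0 ?oner_eq0.
have := le_max_density_card Sstar_max (Sstar :\ u).
rewrite -/d /peel_weight f_Sstar card_Sstar mulrDr mulr1; lra.
Qed.

Hypothesis peel_weight_mono : forall (S S' : {set T}) u, S \subset S' -> u \in S ->
  peel_weight f u S <= peel_weight f u S'.
Hypothesis k_gt0 : (0 < k)%N.

Lemma peel_density_approx (Sp Sstar : {set T}) :
  (forall i, S_ i != set0 -> density f (S_ i) <= density f Sp) ->
  Sstar != set0 ->
  (forall S : {set T}, S != set0 -> density f S <= density f Sstar) ->
  density f Sstar / (k%:R * (1 + eps)) <= density f Sp.
Proof.
move=> Sp_max Sstar_n0 Sstar_max.
have [i [u uS [sub_Si le_w]]] := exists_peeled_vertex Sstar_n0.
have Si_n0 : S_ i != set0 by apply/set0Pn; exists u; apply: (subsetP sub_Si).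
rewrite ler_pdivrMr ?mulr_gt0 ?ltr0n ?ltr_wpDr // mulrC.
apply: le_trans (max_density_le_peel_weight Sstar_max uS) _.
apply: le_trans (peel_weight_mono sub_Si uS) _; apply: (le_trans le_w).
by rewrite ler_wpM2l ?mulr_ge0 ?ler0n ?addr_ge0 ?Sp_max.
Qed.

End PeelingApproximation.

Section TypeAWeight.
Variables (R : realFieldType) (T : finType) (E : rel T) (a : T -> R) (c : T -> T -> R).
Hypothesis a_ge0 : forall u, 0 <= a u.
Hypothesis c_ge0 : forall u v, E u v -> 0 <= c u v.

Definition induced_edges (S : {set T}) : {set T * T} :=
  [set p : T * T | (p.1 \in S) && (p.2 \in S) && E p.1 p.2].

Local Notation f := (typeA_weight E a c).

Lemma typeA_weightE (S : {set T}) :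
  f S = \sum_(u in S) a u + \sum_(p in induced_edges S) c p.1 p.2.
Proof. by []. Qed.

Lemma c_ge0_induced (S : {set T}) p : p \in induced_edges S -> 0 <= c p.1 p.2.
Proof. by rewrite inE => /andP[_ /c_ge0]. Qed.

Lemma typeA_weight_set0 : f set0 = 0.
Proof.
rewrite typeA_weightE big_set0 add0r big_pred0 // => p.
by rewrite inE !in_set0.
Qed.

Lemma typeA_weight_ge0 (S : {set T}) : 0 <= f S.
Proof. by rewrite addr_ge0 ?sumr_ge0 // => p /c_ge0_induced. Qed.

Lemma peel_weight_typeA (S : {set T}) u : u \in S -> peel_weight f u S =
  a u + \sum_(p in induced_edges S | (p.1 == u) || (p.2 == u)) c p.1 p.2.
Proof.
move=> uS; rewrite /peel_weight !typeA_weightE (big_setD1 u uS) /=.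
rewrite (bigID (fun p : T * T => (p.1 == u) || (p.2 == u))) /=.
have -> : \sum_(p in induced_edges S | ~~ ((p.1 == u) || (p.2 == u))) c p.1 p.2 =
          \sum_(p in induced_edges (S :\ u)) c p.1 p.2.
  apply: eq_bigl => p; rewrite !inE.
  by case: (p.1 == u); case: (p.2 == u); rewrite ?andbF ?andbT.
ring.
Qed.

Lemma peel_weight_typeA_mono (S S' : {set T}) u : S \subset S' -> u \in S ->
  peel_weight f u S <= peel_weight f u S'.
Proof.
move=> sub_SS' uS; rewrite !peel_weight_typeA ?(subsetP sub_SS') // lerD2l.
apply: ler_sum_cond => [p|p /andP[/c_ge0_induced]] //; rewrite !inE.
case/andP=> /andP[/andP[p1S p2S] ->] ->.
by rewrite (subsetP sub_SS' _ p1S) (subsetP sub_SS' _ p2S).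
Qed.

(* Each induced edge contributes to the peeling weights of its two ends. *)
Lemma sum_peel_weight_typeA_le (S : {set T}) :
  \sum_(u in S) peel_weight f u S <= 2%:R * f S.
Proof.
have incident_le u :
    \sum_(p in induced_edges S | (p.1 == u) || (p.2 == u)) c p.1 p.2 <=
    \sum_(p in induced_edges S | p.1 == u) c p.1 p.2 +
    \sum_(p in induced_edges S | p.2 == u) c p.1 p.2.
  rewrite !big_mkcondr -big_split ler_sum //= => p /c_ge0_induced c_p.
  by case: (p.1 == u); case: (p.2 == u); rewrite /= ?addr0 ?add0r ?lerDl.
have end_partition (e : T * T -> T) : (forall p, p \in induced_edges S -> e p \in S) ->
    \sum_(p in induced_edges S) c p.1 p.2 =
    \sum_(u in S) \sum_(p in induced_edges S | e p == u) c p.1 p.2.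
  exact: partition_big.
rewrite (eq_bigr _ (fun u uS => peel_weight_typeA uS)) big_split /=.
rewrite typeA_weightE mulrDl mul1r addrACA lerD ?lerDl ?sumr_ge0 //.
apply: le_trans (ler_sum _ (fun u _ => incident_le u)) _.
by rewrite big_split /= -!end_partition // => p; rewrite inE => /andP[/andP[]].
Qed.

End TypeAWeight.

Lemma sum_card_members (T : finType) (S : {set T}) (C : {set {set T}}) :
  (forall K, K \in C -> K \subset S) ->
  (\sum_(u in S) #|[set K in C | u \in K]| = \sum_(K in C) #|K|)%N.
Proof.
move=> C_sub; under eq_bigr do rewrite -sum1dep_card.
rewrite (exchange_big_dep (fun K => K \in C)) => [|u K _ /andP[] //].
apply: eq_bigr => K KC; rewrite -sum1_card; apply: eq_bigl => u /=.
by rewrite KC andb_idl // => /(subsetP (C_sub K KC)).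
Qed.

Section KCliqueCount.
Variables (R : realFieldType) (T : finType) (E : rel T) (k : nat).

Definition kcliques (S : {set T}) : {set {set T}} :=
  [set K : {set T} | (K \subset S) && (#|K| == k) && is_clique E K].

Local Notation f := (@kclique_count R T E k).

Lemma kclique_count_set0 : (0 < k)%N -> f set0 = 0.
Proof.
move=> k_gt0; rewrite /kclique_count (_ : [set K | _] = set0) ?cards0 //.
apply/setP => K; rewrite !inE subset0; case: eqP => [->|] //=.
by rewrite cards0 eq_sym eqn0Ngt k_gt0.
Qed.

Lemma peel_weight_kclique (S : {set T}) u :
  peel_weight f u S = #|[set K in kcliques S | u \in K]|%:R.
Proof.
rewrite /peel_weight /kclique_count -/(kcliques S) -/(kcliques (S :\ u)).
have -> : kcliques (S :\ u) = kcliques S :\: [set K : {set T} | u \in K].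
  apply/setP => K; rewrite !inE subsetD1.
  by case: (K \subset S); case: (u \in K); rewrite ?andbF ?andbT.
by rewrite -(cardsID [set K : {set T} | u \in K] (kcliques S)) natrD addrK setIdE.
Qed.

Lemma peel_weight_kclique_mono (S S' : {set T}) u : S \subset S' ->
  peel_weight f u S <= peel_weight f u S'.
Proof.
move=> sub_SS'; rewrite !peel_weight_kclique ler_nat subset_leq_card //.
apply/subsetP => K; rewrite !inE => /andP[/andP[/andP[KS ->] ->] ->].
by rewrite (subset_trans KS sub_SS').
Qed.

(* Every k-clique of G[S] is counted once for each of its k vertices. *)
Lemma sum_peel_weight_kclique (S : {set T}) :
  \sum_(u in S) peel_weight f u S = k%:R * f S.
Proof.
under eq_bigr do rewrite peel_weight_kclique.
rewrite -natr_sum sum_card_members => [|K]; last by rewrite inE => /andP[/andP[]].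
rewrite /kclique_count -/(kcliques S) -natrM mulnC -sum_nat_const.
by congr _%:R; apply: eq_bigr => K; rewrite inE => /andP[/andP[_ /eqP]].
Qed.

End KCliqueCount.

Theorem theorem4p2 (R : realFieldType) (T : finType) (E : rel T)
    (f : {set T} -> R) (k : nat) (eps : R) (Sp Sstar : {set T}) :
  (0 < #|T|)%N ->
  irreflexive E ->
  ((k = 2%N /\ is_typeA E f) \/ (3 <= k)%N /\ is_typeB E k f) ->
  0 <= eps ->
  (* S^p is a maximizer of g among the nonempty sets produced by the algorithm *)
  (exists i, Sp = peel_iter f k eps i) ->
  Sp != set0 ->
  (forall i, peel_iter f k eps i != set0 ->
     density f (peel_iter f k eps i) <= density f Sp) ->
  (* S^* maximizes g over nonempty subsets of V *)
  Sstar != set0 ->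
  (forall S : {set T}, S != set0 -> density f S <= density f Sstar) ->
  density f Sstar / (k%:R * (1 + eps)) <= density f Sp.
Proof.
move=> _ _ [[-> [a [c [a_ge0 [c_ge0 ->]]]]] | [k_ge3 [_ ->]]] eps_ge0 _ _.
  apply: peel_density_approx => //.
  - exact: typeA_weight_ge0.
  - exact: sum_peel_weight_typeA_le.
  - exact: typeA_weight_set0.
  - exact: peel_weight_typeA_mono.
have k_gt0 : (0 < k)%N by apply: leq_trans k_ge3.
apply: peel_density_approx => //.
- by move=> S; rewrite sum_peel_weight_kclique.
- exact: kclique_count_set0.
- by move=> S S' u sub_SS' _; apply: peel_weight_kclique_mono.
Qed.
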